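(* Let $n,k,t$ be positive integers with $k>t>0$, $n>2k-t$ and $n<(t+1)(k+1-t)$. Then $$\operatorname{tw}(K(n,k,t))< \binom{n}{k}-\binom{n-t}{k-t}-1.$$
   Context: For integers $k>t\ge 1$ and $n>2k-t$, the generalized Kneser graph $K(n,k,t)$ is the graph whose vertices are the $k$-element subsets of $[n]=\{1,\dots,n\}$, two vertices $K,K'$ being adjacent if and only if $|K\cap K'|<t$. A tree decomposition of a graph $\Gamma$ is a pair $(T,(B_x)_{x\in V(T)})$ where $T$ is a tree and each $B_x\subseteq V(\Gamma)$, such that every edge of $\Gamma$ is contained in some $B_x$, and for each vertex $v$ of $\Gamma$ the set $\{x\in V(T): v\in B_x\}$ is non-empty and induces a connected subgraph of $T$. Its width is $\max_x |B_x|-1$, and the treewidth $\operatorname{tw}(\Gamma)$ is the minimum width of a tree decomposition of $\Gamma$. *)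

From mathcomp Require Import all_boot.
Set Implicit Arguments. Unset Strict Implicit. Unset Printing Implicit Defensive.

(* Generalized Kneser graph K(n,k,t): vertices are k-subsets of [n]
   (modelled as {set 'I_n} of cardinality k), adjacent iff |K :&: K'| < t. *)
Definition kvertex (n k : nat) := {A : {set 'I_n} | #|A| == k}.

Definition kneser_adj (n k t : nat) : rel (kvertex n k) :=
  fun K K' => #|val K :&: val K'| < t.

Definition n_edges (T : finType) (e : rel T) : nat :=
  #|[set p : T * T | e p.1 p.2]| %/ 2.

Definition is_tree (T : finType) (e : rel T) : Prop :=
  [/\ irreflexive e, symmetric e, 0 < #|T|,
      (forall x y : T, connect e x y) & n_edges e = #|T| - 1].

Definition induces_connected (T : finType) (e : rel T) (S : {set T}) : Prop :=
  S != set0 /\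
  forall x y, x \in S -> y \in S ->
    connect [rel a b | [&& e a b, a \in S & b \in S]] x y.

Definition tree_decomposition (V : finType) (adj : rel V)
    (T : finType) (te : rel T) (B : T -> {set V}) : Prop :=
  [/\ is_tree te,
      (forall u v : V, adj u v -> exists x : T, (u \in B x) && (v \in B x)) &
      (forall v : V, induces_connected te [set x | v \in B x])].

Definition td_width (V T : finType) (B : T -> {set V}) : nat :=
  (\max_(x : T) #|B x|) - 1.

(* tw(G) < b  unfolds to: some tree decomposition of G has width < b.
   Tree index sets are taken to be ordinal types 'I_m (any finite tree is
   isomorphic to one of these). *)
Definition treewidth_lt (V : finType) (adj : rel V) (b : nat) : Prop :=
  exists (m : nat) (te : rel 'I_m) (B : 'I_m -> {set V}),
    tree_decomposition adj te B /\ td_width B < b.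

From mathcomp Require Import all_boot zify.
Set Implicit Arguments. Unset Strict Implicit. Unset Printing Implicit Defensive.

(* Fix P with |P| = t + 2.  Any two k-sets meeting P in at least t + 1 points
   share at least t points, so these k-sets form an independent set I of
   K(n,k,t); counting shows |I| > C(n-t, k-t) exactly when
   n < (t+1)(k+1-t).  Take the star whose centre bag is the complement of I
   and whose leaves carry the closed neighbourhoods N[v] of the v in I: every
   edge has an endpoint outside I or lies in some N[v], and a vertex of I lies
   only in its own leaf bag.  The centre bag is small because I is large, and
   each N[v] is small because v has at least C(n-t, k-t) + 2 non-neighbours
   (the k-sets through a t-subset of v, together with those meeting a
   (t+1)-subset P' of v exactly in P' minus one point of that t-subset). *)

Lemma card_bigcup_disjoint (I T : finType) (A : {pred I}) (F : I -> {set T}) :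
  {in A &, forall i j, i != j -> [disjoint F i & F j]} ->
  #|\bigcup_(i in A) F i| = \sum_(i in A) #|F i|.
Proof.
move=> dF; rewrite -!big_enum /=.
have : {subset enum A <= A} by move=> i; rewrite mem_enum.
elim: (enum A) (enum_uniq A) => [|i s IHs] /=; first by rewrite !big_nil cards0.
case/andP=> i_notin_s uniq_s sA; rewrite !big_cons cardsU.
have disj_i : [disjoint F i & \bigcup_(j <- s) F j].
  rewrite big_uniq //; apply: bigcup_disjoint => j js.
  apply: dF; rewrite ?sA ?inE ?eqxx ?js ?orbT //.
  by apply: contraNneq i_notin_s => ->.
rewrite (disjoint_setI0 disj_i) cards0 subn0 IHs // => j js.
by apply: sA; rewrite inE js orbT.
Qed.

Section SubsetCounting.
Variable T : finType.
Implicit Types A P Q R K : {set T}.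

Lemma exists_subset_card A m : m <= #|A| -> exists2 B : {set T}, B \subset A & #|B| = m.
Proof.
case/card_geqP=> s [uniq_s size_s sA]; exists [set x in s].
  by apply/subsetP=> x; rewrite inE => /sA.
by rewrite cardsE (card_uniqP uniq_s).
Qed.

Definition extensions P Q m := [set K : {set T} | (K :&: P == Q) && (#|K| == #|Q| + m)].

Lemma card_extensions P Q m : Q \subset P -> #|extensions P Q m| = 'C(#|~: P|, m).
Proof.
move=> QP.
have -> : extensions P Q m =
          setU Q @: [set R : {set T} | R \subset ~: P & #|R| == m].
  apply/setP=> K; rewrite inE; apply/andP/imsetP.
    move=> [/eqP KP /eqP cK]; exists (K :&: ~: P).
      rewrite inE subsetIr /=; move: (cardsID P K); rewrite KP cK setDE.
      by move=> h; apply/eqP; lia.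
    by rewrite -KP -setIUr setUCr setIT.
  move=> [R]; rewrite inE => /andP[RP /eqP cR] ->.
  have dRP : [disjoint R & P] by rewrite -[P]setCK -subsets_disjoint.
  have RP0 := disjoint_setI0 dRP.
  have QR0 : Q :&: R = set0.
    by apply/disjoint_setI0; apply: disjointWl QP _; rewrite disjoint_sym.
  by rewrite setIUl (setIidPl QP) RP0 setU0 cardsU QR0 cards0 subn0 cR.
rewrite card_in_imset ?cards_draws //.
move=> R1 R2; rewrite !inE => /andP[R1P _] /andP[R2P _] eqQR.
have outside (R : {set T}) : R \subset ~: P -> (Q :|: R) :&: ~: P = R.
  move=> RP; rewrite setIUl (setIidPl RP).
  suff -> : Q :&: ~: P = set0 by rewrite set0U.
  by apply/disjoint_setI0; rewrite -subsets_disjoint.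
by rewrite -(outside _ R1P) -(outside _ R2P) eqQR.
Qed.

Lemma card_setI_overlap A B P : #|A :&: P| + #|B :&: P| <= #|P| + #|A :&: B|.
Proof.
rewrite -cardsUI leq_add //; apply: subset_leq_card; first by rewrite subUset !subsetIr.
by rewrite setIACA subsetIl.
Qed.

Lemma ltn_card_of_setD A B : #|A :\: B| < #|B :\: A| -> #|A| < #|B|.
Proof. by rewrite -(cardsID B A) -(cardsID A B) setIC ltn_add2l. Qed.

End SubsetCounting.

Lemma bin_ge2 N a : 0 < a < N -> 2 <= 'C(N, a).
Proof.
case: N a => [|N] [|a] //= aN; rewrite binS.
by rewrite -[2]/(1 + 1) leq_add // bin_gt0 // ltnW.
Qed.

Lemma bin_succ_lt N a c : a <= N -> N - a < c * a.+1 -> 'C(N, a.+1) < c * 'C(N, a).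
Proof.
move=> aN lt_Na; rewrite -(ltn_pmul2l (ltn0Sn a)) mul_bin_left mulnCA mulnA.
by rewrite ltn_pmul2r // bin_gt0.
Qed.

Definition star m : rel 'I_m.+1 := fun x y => (x == ord0) != (y == ord0).
Arguments star : clear implicits.

Lemma induces_connected_set1 (T : finType) (e : rel T) x :
  induces_connected e [set x].
Proof.
split; first by apply/set0Pn; exists x; rewrite inE.
by move=> y z; rewrite !inE => /eqP -> /eqP ->; exact: connect0.
Qed.

Lemma star_induces_connected m (S : {set 'I_m.+1}) :
  @ord0 m \in S -> induces_connected (star m) S.
Proof.
move=> S0; split; first by apply/set0Pn; exists ord0.
set eS := [rel a b | [&& star m a b, a \in S & b \in S]].
have to_center x : x \in S -> connect eS x ord0 /\ connect eS ord0 x.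
  move=> xS; have [->|x0] := eqVneq x ord0; first by split; exact: connect0.
  by split; apply: connect1; rewrite /= /star (negbTE x0) eqxx xS S0.
move=> x y /to_center[x0 _] /to_center[_ y0]; exact: connect_trans x0 y0.
Qed.

Lemma star_tree m : is_tree (star m).
Proof.
split.
- by move=> x; rewrite /star eqxx.
- by move=> x y; rewrite /star eq_sym.
- by rewrite card_ord.
- move=> x y; have [_ /(_ x y)] := star_induces_connected (in_setT (@ord0 m)).
  by rewrite !inE => /(_ isT isT); apply: connect_sub => a b /and3P[ab _ _]; exact: connect1.
- rewrite /n_edges; set c := @ord0 m.
  have -> : [set p : 'I_m.+1 * 'I_m.+1 | star m p.1 p.2] =
            setX [set c] (~: [set c]) :|: setX (~: [set c]) [set c].
    by apply/setP => [[x y]]; rewrite !inE /star /=; case: (x == c); case: (y == c).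
  rewrite cardsU !cardsX !cards1 cardsC1 card_ord.
  suff -> : setX [set c] (~: [set c]) :&: setX (~: [set c]) [set c] = set0.
    by rewrite cards0; lia.
  by apply/setP => [[x y]]; rewrite !inE /= andbACA andNb andbF.
Qed.

Section StarDecomposition.
Variables (V : finType) (adj : rel V) (I : {set V}).
Hypotheses (adj_sym : symmetric adj) (I_indep : {in I &, forall u v, ~~ adj u v}).

Definition closed_nbhd v := v |: [set w | adj v w].

(* Node 0 is the centre; the leaf of w is lift 0 (enum_rank w), and its bag is
   empty unless w \in I (the tree has one leaf per vertex of V). *)
Definition star_bag (x : 'I_#|V|.+1) : {set V} :=
  if unlift ord0 x is Some j then
    let w := enum_val j in if w \in I then closed_nbhd w else set0
  else ~: I.

Definition star_leaf w : 'I_#|V|.+1 := lift ord0 (enum_rank w).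

Lemma star_bag_leaf w : star_bag (star_leaf w) = if w \in I then closed_nbhd w else set0.
Proof. by rewrite /star_bag /star_leaf liftK enum_rankK. Qed.

Lemma star_bag_center : star_bag ord0 = ~: I.
Proof. by rewrite /star_bag unlift_none. Qed.

Lemma star_bags_of_indep v : v \in I -> [set x | v \in star_bag x] = [set star_leaf v].
Proof.
move=> vI; apply/setP => x; rewrite !inE; apply/idP/eqP => [|->]; last first.
  by rewrite star_bag_leaf vI !inE eqxx.
rewrite /star_bag /star_leaf; case: unliftP => [j ->|_]; last by rewrite inE vI.
case: ifP => wI; last by rewrite inE.
rewrite !inE => /orP[/eqP ->|wv]; first by rewrite enum_valK.
by move: (I_indep wI vI); rewrite wv.
Qed.

Lemma star_tree_decomposition : tree_decomposition adj (star #|V|) star_bag.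
Proof.
split; first exact: star_tree.
- move=> u v uv; case uI: (u \in I).
    by exists (star_leaf u); rewrite star_bag_leaf uI !inE eqxx uv orbT.
  case vI: (v \in I).
    by exists (star_leaf v); rewrite star_bag_leaf vI !inE eqxx adj_sym uv orbT.
  by exists ord0; rewrite star_bag_center !inE uI vI.
- move=> v; case vI: (v \in I).
    by rewrite star_bags_of_indep //; exact: induces_connected_set1.
  by apply: star_induces_connected; rewrite inE star_bag_center inE vI.
Qed.

Lemma star_width b : 0 < b -> #|~: I| <= b ->
  {in I, forall v, #|closed_nbhd v| <= b} -> td_width star_bag < b.
Proof.
move=> b_gt0 center_le leaf_le.
suff : \max_x #|star_bag x| <= b by rewrite /td_width; lia.
apply/bigmax_leqP => x _; rewrite /star_bag; case: unliftP => [j _|_] //.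
by case: ifP => [/leaf_le //|_]; rewrite cards0.
Qed.

Lemma treewidth_lt_indep b : 0 < b -> #|~: I| <= b ->
  {in I, forall v, #|closed_nbhd v| <= b} -> treewidth_lt adj b.
Proof.
move=> b_gt0 center_le leaf_le; exists #|V|.+1, (star #|V|), star_bag.
by split; [exact: star_tree_decomposition | exact: star_width].
Qed.

End StarDecomposition.

Section Kneser.
Variables n k t : nat.
Local Notation adj := (@kneser_adj n k t).

Lemma card_kvertex : #|{: kvertex n k}| = 'C(n, k).
Proof.
rewrite card_sig -[n in 'C(n, _)]card_ord -card_draws cardsE.
by apply: eq_card => A; rewrite !inE.
Qed.

Lemma kneser_adj_sym : symmetric adj.
Proof. by move=> u v; rewrite /kneser_adj setIC. Qed.

Lemma kneser_nadj_share (u v : kvertex n k) (S : {set 'I_n}) :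
  S \subset val u -> S \subset val v -> #|S| = t -> ~~ adj u v.
Proof.
by move=> Su Sv <-; rewrite /kneser_adj -leqNgt subset_leq_card // subsetI Su Sv.
Qed.

Definition kvertices (F : {set {set 'I_n}}) : {set kvertex n k} := [set w | val w \in F].

Lemma card_kvertices (F : {set {set 'I_n}}) :
  {in F, forall K : {set 'I_n}, #|K| = k} -> #|kvertices F| = #|F|.
Proof.
move=> Fk; rewrite -(card_imset _ val_inj); apply: eq_card => K.
apply/imsetP/idP => [[w]|KF]; first by rewrite inE => wF ->.
by exists (exist _ K (introT eqP (Fk K KF))); rewrite // inE.
Qed.

Lemma cardsC_ord (A : {set 'I_n}) : #|~: A| = n - #|A|.
Proof. by have := cardsC A; rewrite card_ord; lia. Qed.

Definition heavy_sets (P : {set 'I_n}) :=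
  [set K : {set 'I_n} | (#|K| == k) && (t < #|K :&: P|)].

Lemma heavy_sets_indep (P : {set 'I_n}) :
  #|P| = t.+2 -> {in kvertices (heavy_sets P) &, forall u v, ~~ adj u v}.
Proof.
move=> cP u v; rewrite !inE => /andP[_ tu] /andP[_ tv]; rewrite /kneser_adj -leqNgt.
rewrite -(leq_add2l t.+2) -cP; apply: leq_trans (card_setI_overlap _ _ P).
by rewrite cP addSnnS leq_add.
Qed.

Hypotheses (t_lt_k : t < k) (n_gt : 2 * k - t < n).

Lemma card_heavy_sets (P : {set 'I_n}) : n < (t + 1) * (k + 1 - t) -> #|P| = t.+2 ->
  'C(n - t, k - t) < #|heavy_sets P|.
Proof.
move=> n_lt cP; have [T TP cT] : exists2 T : {set 'I_n}, T \subset P & #|T| = t.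
  by apply: exists_subset_card; rewrite cP; lia.
set S := extensions T T (k - t).
set X := extensions P T (k - t).
set Y := \bigcup_(i in T) extensions P (P :\ i) (k - t - 1).
have cardS : #|S| = 'C(n - t, k - t) by rewrite card_extensions // cardsC_ord cT.
have cardX : #|X| = 'C(n - t - 2, (k - t - 1).+1).
  by rewrite card_extensions // cardsC_ord cP; congr 'C(_, _); lia.
have cardY : #|Y| = t * 'C(n - t - 2, k - t - 1).
  rewrite card_bigcup_disjoint; last first.
    move=> i j iT jT; apply: contraNT => /pred0Pn[K /andP[]].
    rewrite !inE => /andP[/eqP KPi _] /andP[/eqP KPj _].
    have : i \notin P :\ j by rewrite -KPj KPi !inE eqxx.
    by rewrite !inE (subsetP TP i iT) andbT negbK.
  under eq_bigr => i iT do rewrite card_extensions ?subsetDl // cardsC_ord cP.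
  by rewrite sum_nat_const cT; congr (_ * 'C(_, _)); lia.
have SX : S :\: heavy_sets P \subset X.
  apply/subsetP => K; rewrite !inE cT => /andP[+ /andP[/eqP KT /eqP cK]].
  have -> : #|K| == k by rewrite cK; apply/eqP; lia.
  rewrite -leqNgt /= => KP_le; rewrite cK eqxx andbT eq_sym eqEcard cT KP_le andbT.
  by rewrite subsetI TP -KT subsetIl.
have YI : Y \subset heavy_sets P :\: S.
  apply/subsetP => K /bigcupP[i iT]; rewrite !inE => /andP[/eqP KPi /eqP cK].
  have iP := subsetP TP i iT.
  have cPi : #|P :\ i| = t.+1 by move: (cardsD1 i P); rewrite iP cP add1n => [[]].
  rewrite KPi cPi ltnSn andbT; have -> : #|K| == k by rewrite cK cPi; apply/eqP; lia.
  rewrite andbT; apply/negP => /andP[/eqP KT _].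
  have : i \in K :&: P by rewrite inE iP andbT; move: iT; rewrite -KT => /setIP[].
  by rewrite KPi !inE eqxx.
(* n < (t+1)(k+1-t) is the binomial inequality |X| < |Y|. *)
rewrite -cardS; apply/ltn_card_of_setD/(leq_ltn_trans (subset_leq_card SX)).
apply: leq_trans (subset_leq_card YI); rewrite cardX cardY.
by apply: bin_succ_lt; nia.
Qed.

Lemma card_non_nbhd (v : kvertex n k) :
  0 < t -> 'C(n - t, k - t) + 2 <= #|~: [set w | adj v w]|.
Proof.
move=> t_gt0.
have [P Pv cP] : exists2 P : {set 'I_n}, P \subset val v & #|P| = t.+1.
  by apply: exists_subset_card; rewrite (eqP (valP v)).
have [T TP cT] : exists2 T : {set 'I_n}, T \subset P & #|T| = t.
  by apply: exists_subset_card; rewrite cP.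
have [x xT] : exists x, x \in T by apply/card_gt0P; rewrite cT.
have xP := subsetP TP x xT.
have cPx : #|P :\ x| = t by move: (cardsD1 x P); rewrite xP cP add1n => [[]].
set F1 := extensions T T (k - t).
set F2 := extensions P (P :\ x) (k - t).
have F12 : F1 :&: F2 = set0.
  apply/setP => K; rewrite !inE; apply/negP => /andP[/andP[/eqP KT _] /andP[/eqP KPx _]].
  have : x \in K :&: P by rewrite inE xP andbT; move: xT; rewrite -KT => /setIP[].
  by rewrite KPx !inE eqxx.
have F_k : {in F1 :|: F2, forall K : {set 'I_n}, #|K| = k}.
  by move=> K; rewrite !inE => /orP[] /andP[_ /eqP ->]; rewrite ?cT ?cPx; lia.
have F_nadj : kvertices (F1 :|: F2) \subset ~: [set w | adj v w].
  apply/subsetP => w; rewrite !inE => /orP[] /andP[/eqP wS _].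
  - by apply: (kneser_nadj_share (S := T)) cT; rewrite ?(subset_trans TP Pv) // -wS subsetIl.
  - apply: (kneser_nadj_share (S := P :\ x)) cPx; first exact: subset_trans (subsetDl _ _) Pv.
    by rewrite -wS subsetIl.
apply: leq_trans (subset_leq_card F_nadj).
rewrite card_kvertices // cardsU F12 cards0 subn0 leq_add //.
  by rewrite card_extensions // cardsC_ord cT.
rewrite card_extensions ?subsetDl // cardsC_ord cP bin_ge2 //; lia.
Qed.

Lemma card_closed_nbhd_lt (v : kvertex n k) :
  0 < t -> #|closed_nbhd adj v| + 'C(n - t, k - t) < 'C(n, k).
Proof.
move=> /(card_non_nbhd v); rewrite -card_kvertex -(cardsC [set w | adj v w]).
have v_nadj : v \notin [set w | adj v w].
  by rewrite inE /kneser_adj setIid (eqP (valP v)) -leqNgt ltnW.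
rewrite /closed_nbhd cardsU1 v_nadj; lia.
Qed.

End Kneser.

Theorem mainTheorem2 (n k t : nat) :
  0 < t -> t < k -> 2 * k - t < n -> n < (t + 1) * (k + 1 - t) ->
  treewidth_lt (@kneser_adj n k t) ('C(n, k) - 'C(n - t, k - t) - 1).
Proof.
move=> t_gt0 t_lt_k n_gt n_lt.
have [P _ cP] : exists2 P : {set 'I_n}, P \subset setT & #|P| = t.+2.
  by apply: exists_subset_card; rewrite cardsT card_ord; lia.
set I := @kvertices n k (@heavy_sets n k t P).
have cardI : 'C(n - t, k - t) < #|I|.
  rewrite card_kvertices; first exact: card_heavy_sets.
  by move=> K; rewrite inE => /andP[/eqP].
have [v vI] : exists v, v \in I by apply/card_gt0P; lia.
have leaf_lt w := card_closed_nbhd_lt t_lt_k n_gt w t_gt0.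
apply: (treewidth_lt_indep (I := I)).
- exact: kneser_adj_sym.
- exact: heavy_sets_indep.
- have : 0 < #|closed_nbhd (@kneser_adj n k t) v|.
    by apply/card_gt0P; exists v; rewrite !inE eqxx.
  by have := leaf_lt v; lia.
- move: cardI (cardsC I); rewrite card_kvertex; move: #|I| #|~: I| => a b; lia.
- move=> w _; move: (leaf_lt w); move: #|closed_nbhd _ w| => x; lia.
Qed.
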